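(* Suppose $\Delta(x,\varepsilon)$ is not independent of $x$. Let $r\ge1$ be the smallest index such that $\Delta_r$ is a nonconstant function, so that $$\Delta(x,\varepsilon)=A(\varepsilon)+\Delta_r(x)\varepsilon^r+o(\varepsilon^r),$$ where $A(\varepsilon)$ is a polynomial in $\varepsilon$ of degree at most $r-1$ with constant coefficients. Then $\Delta_r$ is periodic with period $\mu$, that is, $$\Delta_r(x+\mu)=\Delta_r(x)\quad\text{for all }x\in\mathbb R.$$
   Context: Fix integers $p$ and $q\ge1$ and put $\mu=2\pi p/q$. Let $f:\mathbb R\to\mathbb R$ be a $2\pi$-periodic real-analytic function. For real parameters $\varepsilon,\delta$ set $g(x)=-\delta-\varepsilon f(x)$ and consider the map $T_{\varepsilon,\delta}(x,y)=(x+y+\mu+g(x),\;y+g(x))$ on $\mathbb R^2$. Define ${}_nR$ and ${}_nS$ by $T^n_{\varepsilon,\delta}(x_0,y_0)=(x_0+n\mu+{}_nR,\;y_0+{}_nS)$. There exist $\bar{\bar\varepsilon},\eta>0$ and real-analytic functions $\Delta(x,\varepsilon)$ and $Y(x,\varepsilon)$, defined for $x\in\mathbb R$ and $|\varepsilon|<\bar{\bar\varepsilon}$ and vanishing at $\varepsilon=0$, such that $(\delta,y)=(\Delta(x,\varepsilon),Y(x,\varepsilon))$ is the unique solution with $|\delta|,|y|<\eta$ of ${}_qR(x,y,\varepsilon,\delta)={}_qS(x,y,\varepsilon,\delta)=0$. Write $\Delta(x,\varepsilon)=\sum_{n\ge1}\Delta_n(x)\varepsilon^n$. *)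

From Stdlib Require Import Reals ZArith.
From Coquelicot Require Import Coquelicot.
Open Scope R_scope.

Definition rot_number (p : Z) (q : nat) : R := 2 * PI * IZR p / INR q.

Definition Tmap (mu : R) (f : R -> R) (eps delta : R) (z : R * R) : R * R :=
  let g := - delta - eps * f (fst z) in
  (fst z + snd z + mu + g, snd z + g).

Definition Titer (mu : R) (f : R -> R) (eps delta : R) (n : nat) (z : R * R) : R * R :=
  Nat.iter n (Tmap mu f eps delta) z.

Definition nR (mu : R) (f : R -> R) (n : nat) (x y eps delta : R) : R :=
  fst (Titer mu f eps delta n (x, y)) - x - INR n * mu.
Definition nS (mu : R) (f : R -> R) (n : nat) (x y eps delta : R) : R :=
  snd (Titer mu f eps delta n (x, y)) - y.

Definition real_analytic1 (f : R -> R) : Prop :=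
  forall x0, exists rho, 0 < rho /\ exists a : nat -> R,
    forall x, Rabs (x - x0) < rho -> is_pseries a (x - x0) (f x).

Definition real_analytic2 (F : R -> R -> R) (U : R -> R -> Prop) : Prop :=
  forall x0 e0, U x0 e0 -> exists rho, 0 < rho /\ exists a : nat -> nat -> R,
    forall x e, Rabs (x - x0) < rho -> Rabs (e - e0) < rho ->
      (forall n, ex_series (fun m => Rabs (a n m) * Rabs (x - x0) ^ m * Rabs (e - e0) ^ n))
      /\ ex_series (fun n => Series (fun m => Rabs (a n m) * Rabs (x - x0) ^ m * Rabs (e - e0) ^ n))
      /\ F x e = Series (fun n => Series (fun m => a n m * (x - x0) ^ m * (e - e0) ^ n)).

From Stdlib Require Import Reals ZArith Lra Lia.
From Coquelicot Require Import Coquelicot.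
Open Scope R_scope.

(* Since T commutes with T^q, it maps the q-periodic point (x, Y(x,ε)) of parameter
   δ = Δ(x,ε) to another one, (x + μ + y', y') with y' = O(ε), so uniqueness gives
   Δ(x + μ + y'(ε), ε) = Δ(x, ε).  The coefficients of ε^n for n < r do not depend on x;
   cancelling them and dividing by ε^r leaves the r-th tails of the expansions at x and at
   x + μ + y'(ε).  Joint analyticity of Δ makes these tails continuous at (u, ε) = (0, 0),
   and ε → 0 gives Δ_r(x + μ) = Δ_r(x). *)

Lemma sum_f_R0_Rabs_ge (a : nat -> R) (N n : nat) : (n <= N)%nat ->
  Rabs (a n) <= sum_f_R0 (fun k => Rabs (a k)) N.
Proof.
  induction N as [|N IH]; intros Hn.
  - replace n with 0%nat by lia; simpl; lra.
  - simpl. pose proof (Rabs_pos (a (S N))).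
    destruct (Nat.eq_dec n (S N)) as [->|Hne].
    + assert (0 <= sum_f_R0 (fun k => Rabs (a k)) N)
        by (apply cond_pos_sum; intros; apply Rabs_pos).
      lra.
    + assert (Rabs (a n) <= sum_f_R0 (fun k => Rabs (a k)) N) by (apply IH; lia).
      lra.
Qed.

Lemma ex_series_bounded (a : nat -> R) : ex_series a -> exists M, forall n, Rabs (a n) <= M.
Proof.
  intros Ha. apply ex_series_lim_0, is_lim_seq_spec in Ha.
  destruct (Ha (mkposreal 1 Rlt_0_1)) as [N HN]; simpl in HN.
  exists (1 + sum_f_R0 (fun k => Rabs (a k)) N). intros n.
  assert (0 <= sum_f_R0 (fun k => Rabs (a k)) N)
    by (apply cond_pos_sum; intros; apply Rabs_pos).
  destruct (le_lt_dec N n) as [HNn|HnN].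
  - specialize (HN n HNn). rewrite Rminus_0_r in HN. lra.
  - pose proof (sum_f_R0_Rabs_ge a N n ltac:(lia)). lra.
Qed.

Lemma Series_ge0 (a : nat -> R) : (forall n, 0 <= a n) -> ex_series a -> 0 <= Series a.
Proof.
  intros Ha Hex.
  replace 0 with (Series (fun n => 0 * a n)) by (rewrite Series_scal_l; ring).
  apply Series_le; auto. intros n. rewrite Rmult_0_l. split; [lra | auto].
Qed.

Lemma ex_series_Rmult_l (c : R) (a : nat -> R) : ex_series a -> ex_series (fun n => c * a n).
Proof. intros Ha. apply (ex_series_scal_l c) in Ha. exact Ha. Qed.

Lemma CV_radius_gt0_of_is_series (c : nat -> R) (G : R -> R) (rho : R) : 0 < rho ->
  (forall e, Rabs e < rho -> is_series (fun n => c n * e ^ n) (G e)) ->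
  Rbar_lt 0 (CV_radius c).
Proof.
  intros Hrho Hc.
  assert (Hb : exists M, forall n, Rabs (c n * (rho / 2) ^ n) <= M).
  { apply ex_series_bounded. eexists. apply Hc. rewrite Rabs_pos_eq; lra. }
  pose proof (proj1 (CV_radius_bounded c) (rho / 2) Hb) as Hle.
  destruct (CV_radius c); simpl in *; auto; lra.
Qed.

Lemma pseries_coef_unique (c d : nat -> R) (G : R -> R) (rho : R) : 0 < rho ->
  (forall e, Rabs e < rho -> is_series (fun n => c n * e ^ n) (G e)) ->
  (forall e, Rabs e < rho -> is_series (fun n => d n * e ^ n) (G e)) ->
  forall n, c n = d n.
Proof.
  intros Hrho Hc Hd n.
  apply PSeries_ext_recip;
    [eapply CV_radius_gt0_of_is_series; eauto .. |].
  exists (mkposreal rho Hrho). intros e He.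
  assert (Hlt : Rabs e < rho).
  { unfold ball in He; simpl in He; unfold AbsRing_ball, abs, minus, plus, opp in He; simpl in He.
    rewrite Ropp_0, Rplus_0_r in He. exact He. }
  rewrite (is_pseries_unique c e (G e)), (is_pseries_unique d e (G e)); auto;
    apply is_pseries_R; auto.
Qed.

Lemma is_series_pow_tail (a : nat -> R) (e S : R) (r : nat) : (0 < r)%nat -> e <> 0 ->
  is_series (fun n => a n * e ^ n) S ->
  is_series (fun k => a (k + r)%nat * e ^ k) ((S - sum_n (fun n => a n * e ^ n) (pred r)) / e ^ r).
Proof.
  intros Hr He HS.
  assert (Her : e ^ r <> 0) by (apply pow_nonzero; auto).
  assert (Hshift : is_series (fun k => a (r + k)%nat * e ^ (r + k))
                     (S - sum_n (fun n => a n * e ^ n) (pred r))).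
  { apply (is_series_incr_n (fun n => a n * e ^ n)); auto. unfold plus; simpl.
    rewrite Rplus_comm, Rplus_minus. exact HS. }
  apply (is_series_scal_r (/ e ^ r)) in Hshift.
  eapply is_series_ext; [|exact Hshift]. intros k; simpl.
  rewrite Nat.add_comm, pow_add. field; auto.
Qed.

Lemma is_series_pow_common_tail (a b : nat -> R) (e S : R) (r : nat) : (0 < r)%nat -> e <> 0 ->
  (forall n, (n < r)%nat -> a n = b n) ->
  is_series (fun n => a n * e ^ n) S -> is_series (fun n => b n * e ^ n) S ->
  exists T, is_series (fun k => a (k + r)%nat * e ^ k) T /\
            is_series (fun k => b (k + r)%nat * e ^ k) T.
Proof.
  intros Hr He Hab Ha Hb.
  pose proof (is_series_pow_tail a e S r Hr He Ha) as Ta.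
  pose proof (is_series_pow_tail b e S r Hr He Hb) as Tb.
  rewrite (sum_n_ext_loc _ (fun n => b n * e ^ n)) in Ta
    by (intros n Hn; rewrite Hab by lia; reflexivity).
  eexists; split; eauto.
Qed.

Lemma is_series_geom_dominated (b : nat -> R) (C q : R) : 0 <= q <= 1 / 2 ->
  (forall k, Rabs (b k) <= C * q ^ k) ->
  ex_series b /\ Rabs (Series b - b 0%nat) <= 2 * C * q.
Proof.
  intros Hq Hb.
  assert (HC : 0 <= C) by (specialize (Hb 0%nat); pose proof (Rabs_pos (b 0%nat)); simpl in Hb; lra).
  assert (Hgeom : is_series (fun k => q ^ k) (/ (1 - q))) by (apply is_series_geom; rewrite Rabs_pos_eq; lra).
  assert (Hgeom_ex : forall c, ex_series (fun k => c * q ^ k))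
    by (intros c; apply ex_series_Rmult_l; eexists; exact Hgeom).
  assert (Habs : ex_series (fun k => Rabs (b k))).
  { apply (@ex_series_le _ R_CompleteNormedModule _ (fun k => C * q ^ k)).
    - intros k. change (norm (Rabs (b k))) with (Rabs (Rabs (b k))). rewrite Rabs_Rabsolu. auto.
    - apply Hgeom_ex. }
  assert (Hex : ex_series b) by (apply ex_series_Rabs; auto).
  split; auto.
  rewrite Series_incr_1 by auto. replace (b 0%nat + _ - b 0%nat) with (Series (fun k => b (S k))) by ring.
  eapply Rle_trans; [apply Series_Rabs, (ex_series_incr_1 (fun k => Rabs (b k))); auto |].
  eapply Rle_trans.
  - apply (Series_le _ (fun k => C * q * q ^ k)).
    + intros k. split; [apply Rabs_pos|]. eapply Rle_trans; [apply Hb | right; simpl; ring].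
    + apply Hgeom_ex.
  - rewrite Series_scal_l. change (Series (pow q)) with (Series (fun k => q ^ k)).
    rewrite (is_series_unique _ _ Hgeom).
    assert (/ (1 - q) <= 2) by (apply (Rmult_le_reg_r (1 - q)); [lra | rewrite Rinv_l by lra; lra]).
    assert (0 <= C * q) by (apply Rmult_le_pos; lra).
    replace (2 * C * q) with (C * q * 2) by ring. apply Rmult_le_compat_l; auto.
Qed.

(* For [F (x0 + u) e = Σ_n Σ_m a n m u^m e^n], [row_series a n u] is the coefficient of [e^n]. *)
Definition row_series (a : nat -> nat -> R) (n : nat) (u : R) : R :=
  Series (fun m => a n m * u ^ m).

Definition row_norm (a : nat -> nat -> R) (s : R) (n : nat) : R :=
  Series (fun m => Rabs (a n m) * s ^ m).

Section RowSeries.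

Variables (a : nat -> nat -> R) (s M : R).
Hypothesis s_gt0 : 0 < s.
Hypothesis row_norm_ex : forall n, ex_series (fun m => Rabs (a n m) * s ^ m).
Hypothesis row_norm_le : forall n, row_norm a s n * s ^ n <= M.

Lemma row_norm_ge0 n : 0 <= row_norm a s n.
Proof.
  apply Series_ge0; auto. intros m. apply Rmult_le_pos; [apply Rabs_pos | apply pow_le; lra].
Qed.

Lemma row_term_Rabs_le n u m : Rabs u <= s -> Rabs (a n m * u ^ m) <= Rabs (a n m) * s ^ m.
Proof.
  intros Hu. rewrite Rabs_mult, <- RPow_abs.
  apply Rmult_le_compat_l; [apply Rabs_pos |]. apply pow_incr. split; auto. apply Rabs_pos.
Qed.

Lemma ex_row_series_Rabs n u : Rabs u <= s -> ex_series (fun m => Rabs (a n m * u ^ m)).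
Proof.
  intros Hu. apply (@ex_series_le _ R_CompleteNormedModule _ (fun m => Rabs (a n m) * s ^ m)); auto.
  intros m. change (norm (Rabs (a n m * u ^ m))) with (Rabs (Rabs (a n m * u ^ m))).
  rewrite Rabs_Rabsolu. apply row_term_Rabs_le; auto.
Qed.

Lemma row_series_le n u : Rabs u <= s -> Rabs (row_series a n u) <= row_norm a s n.
Proof.
  intros Hu. unfold row_series. eapply Rle_trans; [apply Series_Rabs, ex_row_series_Rabs; auto |].
  apply Series_le; auto. intros m. split; [apply Rabs_pos | apply row_term_Rabs_le; auto].
Qed.

Lemma row_series_sub0 n u : Rabs u <= s ->
  Rabs (row_series a n u - a n 0%nat) <= Rabs u / s * row_norm a s n.
Proof.
  intros Hu. pose proof (ex_row_series_Rabs n u Hu) as Habs.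
  unfold row_series. rewrite Series_incr_1 by (apply ex_series_Rabs; auto).
  simpl pow at 1. replace (a n 0%nat * 1 + _ - a n 0%nat)
    with (Series (fun k => a n (S k) * u ^ S k)) by ring.
  eapply Rle_trans;
    [apply Series_Rabs, (ex_series_incr_1 (fun m => Rabs (a n m * u ^ m))); auto |].
  assert (Hsu : 0 <= Rabs u / s) by (apply Rdiv_le_0_compat; [apply Rabs_pos | lra]).
  eapply Rle_trans.
  - apply (Series_le _ (fun k => Rabs u / s * (Rabs (a n (S k)) * s ^ S k))).
    + intros k. split; [apply Rabs_pos |].
      rewrite Rabs_mult, <- RPow_abs. simpl.
      assert (Rabs u ^ k <= s ^ k) by (apply pow_incr; split; auto; apply Rabs_pos).
      replace (Rabs u / s * (Rabs (a n (S k)) * (s * s ^ k)))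
        with (Rabs (a n (S k)) * Rabs u * s ^ k) by (field; lra).
      rewrite <- Rmult_assoc. apply Rmult_le_compat_l; auto.
      apply Rmult_le_pos; apply Rabs_pos.
    + apply ex_series_Rmult_l, (ex_series_incr_1 (fun m => Rabs (a n m) * s ^ m)). auto.
  - rewrite Series_scal_l. apply Rmult_le_compat_l; auto.
    unfold row_norm. rewrite (Series_incr_1 (fun m => Rabs (a n m) * s ^ m)) by auto.
    simpl pow. pose proof (Rabs_pos (a n 0%nat)). lra.
Qed.

Lemma row_series_at0 n : row_series a n 0 = a n 0%nat.
Proof.
  assert (H0 : Rabs 0 <= s) by (rewrite Rabs_R0; lra).
  pose proof (row_series_sub0 n 0 H0) as Hle. rewrite Rabs_R0, Rdiv_0_l, Rmult_0_l in Hle.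
  apply Rminus_diag_uniq, Rabs_eq_0. pose proof (Rabs_pos (row_series a n 0 - a n 0%nat)). lra.
Qed.

Lemma row_tail_estimate r u e : Rabs u <= s -> Rabs e <= s / 2 ->
  ex_series (fun k => row_series a (k + r) u * e ^ k) /\
  Rabs (Series (fun k => row_series a (k + r) u * e ^ k) - a r 0%nat)
    <= Rabs u / s * row_norm a s r + 2 * (M / s ^ r) * (Rabs e / s).
Proof.
  intros Hu He.
  assert (Hsr : 0 < s ^ r) by (apply pow_lt; lra).
  assert (Hq : 0 <= Rabs e / s <= 1 / 2).
  { split; [apply Rdiv_le_0_compat; [apply Rabs_pos | lra] |].
    apply (Rmult_le_reg_r s); [lra |]. field_simplify; lra. }
  assert (Hdom : forall k, Rabs (row_series a (k + r) u * e ^ k) <= M / s ^ r * (Rabs e / s) ^ k).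
  { intros k. rewrite Rabs_mult, <- RPow_abs.
    assert (Hnorm : row_norm a s (k + r) <= M / s ^ (k + r)).
    { apply (Rmult_le_reg_r (s ^ (k + r))); [apply pow_lt; lra |].
      unfold Rdiv. rewrite Rmult_assoc, Rinv_l, Rmult_1_r by (apply pow_nonzero; lra). auto. }
    eapply Rle_trans.
    - apply Rmult_le_compat_r; [apply pow_le, Rabs_pos |].
      eapply Rle_trans; [apply row_series_le; auto | exact Hnorm].
    - right. unfold Rdiv. rewrite Rpow_mult_distr, pow_inv, pow_add. field. split; apply pow_nonzero; lra. }
  destruct (is_series_geom_dominated _ _ _ Hq Hdom) as [Hex Htail].
  split; auto.
  simpl in Htail. rewrite Rmult_1_r in Htail.
  pose proof (row_series_sub0 r u Hu).
  replace (Series _ - a r 0%nat)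
    with ((Series (fun k => row_series a (k + r) u * e ^ k) - row_series a r u)
          + (row_series a r u - a r 0%nat)) by ring.
  eapply Rle_trans; [apply Rabs_triang | lra].
Qed.

Lemma row_tail_near r eps : 0 < eps -> exists d, 0 < d /\ forall u e T,
  Rabs u <= d -> Rabs e <= d ->
  is_series (fun k => row_series a (k + r) u * e ^ k) T -> Rabs (T - a r 0%nat) < eps.
Proof.
  intros Heps.
  assert (HM : 0 <= M) by (pose proof (row_norm_le 0%nat); pose proof (row_norm_ge0 0%nat); simpl in *; lra).
  assert (Hsr : 0 < s ^ r) by (apply pow_lt; lra).
  pose proof (row_norm_ge0 r) as Hc.
  set (K := row_norm a s r / s + 2 * (M / s ^ r) / s).
  assert (HK : 0 <= K).
  { unfold K. apply Rplus_le_le_0_compat; apply Rdiv_le_0_compat; try lra.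
    apply Rmult_le_pos; [lra | apply Rdiv_le_0_compat; lra]. }
  set (d := Rmin (s / 2) (eps / (K + 1))).
  assert (Hd : 0 < d <= s / 2 /\ d * K < eps).
  { pose proof (Rmin_l (s / 2) (eps / (K + 1))). pose proof (Rmin_r (s / 2) (eps / (K + 1))).
    split; [split; [apply Rmin_glb_lt; [lra | apply Rdiv_lt_0_compat; lra] | auto] |].
    apply (Rle_lt_trans _ (eps / (K + 1) * K)); [apply Rmult_le_compat_r; auto |].
    apply (Rmult_lt_reg_r (K + 1)); [lra |]. field_simplify; nra. }
  exists d. split; [lra |].
  intros u e T Hu He HT.
  destruct (row_tail_estimate r u e ltac:(lra) ltac:(lra)) as [_ Hest].
  rewrite (is_series_unique _ _ HT) in Hest.
  assert (Hest_d : Rabs u / s * row_norm a s r + 2 * (M / s ^ r) * (Rabs e / s) <= d * K).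
  { replace (Rabs u / s * row_norm a s r + 2 * (M / s ^ r) * (Rabs e / s))
      with (Rabs u * (row_norm a s r / s) + Rabs e * (2 * (M / s ^ r) / s)) by (field; lra).
    unfold K. rewrite Rmult_plus_distr_l.
    apply Rplus_le_compat; apply Rmult_le_compat_r; auto;
      apply Rdiv_le_0_compat; try lra; apply Rmult_le_pos; [lra | apply Rdiv_le_0_compat; lra]. }
  lra.
Qed.

End RowSeries.

Lemma real_analytic2_row_expansion (F : R -> R -> R) (U : R -> R -> Prop) (x0 : R) :
  real_analytic2 F U -> U x0 0 ->
  exists (a : nat -> nat -> R) (s M : R), 0 < s /\
    (forall n, ex_series (fun m => Rabs (a n m) * s ^ m)) /\
    (forall n, row_norm a s n * s ^ n <= M) /\
    (forall u e, Rabs u <= s -> Rabs e <= s / 2 ->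
       is_series (fun n => row_series a n u * e ^ n) (F (x0 + u) e)).
Proof.
  intros HF HU. destruct (HF x0 0 HU) as [rho [Hrho [a Ha]]].
  set (s := rho / 2).
  assert (Hs : 0 < s < rho) by (unfold s; lra).
  assert (Hrep : forall u e, Rabs u < rho -> Rabs e < rho ->
            (forall n, ex_series (fun m => Rabs (a n m) * Rabs u ^ m * Rabs e ^ n)) /\
            ex_series (fun n => Series (fun m => Rabs (a n m) * Rabs u ^ m * Rabs e ^ n)) /\
            F (x0 + u) e = Series (fun n => Series (fun m => a n m * u ^ m * e ^ n))).
  { intros u e Hu He. specialize (Ha (x0 + u) e).
    replace (x0 + u - x0) with u in Ha by ring. rewrite Rminus_0_r in Ha. auto. }
  assert (Hss : Rabs s < rho) by (rewrite Rabs_pos_eq; lra).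
  destruct (Hrep s s Hss Hss) as [Hrow [Hcol _]]. rewrite Rabs_pos_eq in Hrow, Hcol by lra.
  assert (Hrow' : forall n, ex_series (fun m => Rabs (a n m) * s ^ m)).
  { intros n. apply (ex_series_ext (fun m => / s ^ n * (Rabs (a n m) * s ^ m * s ^ n))).
    - intros m; simpl. field. apply pow_nonzero; lra.
    - apply ex_series_Rmult_l, Hrow. }
  assert (Hcol' : ex_series (fun n => row_norm a s n * s ^ n)).
  { eapply ex_series_ext; [| exact Hcol]. intros n. unfold row_norm. apply Series_scal_r. }
  destruct (ex_series_bounded _ Hcol') as [M HM].
  exists a, s, M. split; [lra |]. split; [auto |]. split.
  { intros n. eapply Rle_trans; [apply Rle_abs | apply HM]. }
  intros u e Hu He.
  destruct (Hrep u e ltac:(lra) ltac:(lra)) as [_ [_ ->]].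
  destruct (row_tail_estimate a s M ltac:(lra) Hrow'
              (fun n => Rle_trans _ _ _ (Rle_abs _) (HM n)) 0 u e Hu He) as [Hex _].
  rewrite (Series_ext _ (fun n => row_series a n u * e ^ n))
    by (intros n; unfold row_series; apply Series_scal_r).
  apply Series_correct. eapply ex_series_ext; [| exact Hex].
  intros n; simpl. rewrite Nat.add_0_r. reflexivity.
Qed.

Lemma real_analytic2_continuous_at0 (F : R -> R -> R) (U : R -> R -> Prop) (x0 : R) :
  real_analytic2 F U -> U x0 0 -> forall eps, 0 < eps ->
  exists d, 0 < d /\ forall e, Rabs e <= d -> Rabs (F x0 e - F x0 0) < eps.
Proof.
  intros HF HU eps Heps.
  destruct (real_analytic2_row_expansion F U x0 HF HU) as [a [s [M [Hs [Hrow [HM Hexp]]]]]].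
  destruct (row_tail_near a s M Hs Hrow HM 0 (eps / 2) ltac:(lra)) as [d [Hd Hnear]].
  assert (Hclose : forall e, Rabs e <= Rmin d (s / 2) -> Rabs (F x0 e - a 0%nat 0%nat) < eps / 2).
  { intros e He. pose proof (Rmin_l d (s / 2)). pose proof (Rmin_r d (s / 2)).
    apply (Hnear 0 e); [rewrite Rabs_R0; lra | lra |].
    assert (Hs0 : Rabs 0 <= s) by (rewrite Rabs_R0; lra).
    pose proof (Hexp 0 e Hs0 ltac:(lra)) as HFe. rewrite Rplus_0_r in HFe.
    eapply is_series_ext; [| exact HFe]. intros n; simpl. rewrite Nat.add_0_r. reflexivity. }
  exists (Rmin d (s / 2)). split; [apply Rmin_glb_lt; lra |].
  intros e He.
  assert (H0 : Rabs 0 <= Rmin d (s / 2)) by (rewrite Rabs_R0; apply Rmin_glb; lra).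
  pose proof (Hclose e He). pose proof (Hclose 0 H0).
  replace (F x0 e - F x0 0) with ((F x0 e - a 0%nat 0%nat) - (F x0 0 - a 0%nat 0%nat)) by ring.
  eapply Rle_lt_trans; [apply Rabs_triang |]. rewrite Rabs_Ropp. lra.
Qed.

Lemma real_analytic2_tail_near (F : R -> R -> R) (U : R -> R -> Prop) (Fn : nat -> R -> R)
  (x0 : R) :
  real_analytic2 F U -> U x0 0 ->
  (forall x, exists rho, 0 < rho /\
     forall e, Rabs e < rho -> is_series (fun n => Fn n x * e ^ n) (F x e)) ->
  forall r eps, 0 < eps -> exists d, 0 < d /\ forall u e, Rabs u <= d -> Rabs e <= d ->
    is_series (fun n => Fn n (x0 + u) * e ^ n) (F (x0 + u) e) /\
    forall T, is_series (fun k => Fn (k + r)%nat (x0 + u) * e ^ k) T -> Rabs (T - Fn r x0) < eps.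
Proof.
  intros HF HU Hcoef r eps Heps.
  destruct (real_analytic2_row_expansion F U x0 HF HU) as [a [s [M [Hs [Hrow [HM Hexp]]]]]].
  assert (Hrow_coef : forall u, Rabs u <= s -> forall n, row_series a n u = Fn n (x0 + u)).
  { intros u Hu. destruct (Hcoef (x0 + u)) as [rho [Hrho Hser]].
    apply (pseries_coef_unique _ _ (F (x0 + u)) (Rmin (s / 2) rho)).
    - apply Rmin_glb_lt; lra.
    - intros e He. apply Hexp; auto. pose proof (Rmin_l (s / 2) rho). lra.
    - intros e He. apply Hser. pose proof (Rmin_r (s / 2) rho). lra. }
  assert (Hr0 : a r 0%nat = Fn r x0).
  { rewrite <- (row_series_at0 a s Hs Hrow), Hrow_coef by (rewrite Rabs_R0; lra).
    rewrite Rplus_0_r. reflexivity. }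
  destruct (row_tail_near a s M Hs Hrow HM r eps Heps) as [d [Hd Hnear]].
  exists (Rmin d (s / 2)). split; [apply Rmin_glb_lt; lra |].
  intros u e Hu He. pose proof (Rmin_l d (s / 2)). pose proof (Rmin_r d (s / 2)).
  split.
  - eapply is_series_ext; [| apply Hexp; lra].
    intros n; simpl. rewrite Hrow_coef by lra. reflexivity.
  - intros T HT. rewrite <- Hr0. apply (Hnear u e); try lra.
    eapply is_series_ext; [| exact HT]. intros k; simpl. rewrite Hrow_coef by lra. reflexivity.
Qed.

Lemma periodic_add_INR_mult (f : R -> R) (T : R) : (forall x, f (x + T) = f x) ->
  forall n x, f (x + T * INR n) = f x.
Proof.
  intros Hf n. induction n as [|n IH]; intros x.
  - simpl. rewrite Rmult_0_r, Rplus_0_r. reflexivity.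
  - rewrite S_INR. replace (x + T * (INR n + 1)) with (x + T * INR n + T) by ring.
    rewrite Hf. apply IH.
Qed.

Lemma periodic_add_IZR_mult (f : R -> R) (T : R) : (forall x, f (x + T) = f x) ->
  forall k x, f (x + T * IZR k) = f x.
Proof.
  intros Hf k x. destruct (Z_le_gt_dec 0 k) as [Hk | Hk].
  - rewrite <- (Z2Nat.id k), <- INR_IZR_INZ by lia. apply periodic_add_INR_mult; auto.
  - replace k with (- Z.of_nat (Z.to_nat (- k)))%Z by lia.
    rewrite opp_IZR, <- INR_IZR_INZ.
    rewrite <- (periodic_add_INR_mult f T Hf (Z.to_nat (- k)) (x + T * - INR (Z.to_nat (- k)))).
    f_equal. ring.
Qed.

Lemma INR_mult_rot_number (p : Z) (q : nat) : (0 < q)%nat -> INR q * rot_number p q = 2 * PI * IZR p.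
Proof. intros Hq. unfold rot_number. field. apply not_0_INR. lia. Qed.

(* The new point is T(x, y), which is again q-periodic because T commutes with T^q. *)
Lemma periodic_orbit_Tmap (p : Z) (q : nat) (f : R -> R) (e d x y : R) :
  (0 < q)%nat -> (forall x, f (x + 2 * PI) = f x) ->
  nR (rot_number p q) f q x y e d = 0 -> nS (rot_number p q) f q x y e d = 0 ->
  nR (rot_number p q) f q (x + rot_number p q + (y - d - e * f x)) (y - d - e * f x) e d = 0 /\
  nS (rot_number p q) f q (x + rot_number p q + (y - d - e * f x)) (y - d - e * f x) e d = 0.
Proof.
  intros Hq Hf HR HS. set (mu := rot_number p q) in *. set (y' := y - d - e * f x).
  unfold nR, nS in *.
  assert (Hq_orbit : Titer mu f e d q (x, y) = (x + INR q * mu, y)).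
  { destruct (Titer mu f e d q (x, y)) as [X Y]. simpl in HR, HS. f_equal; lra. }
  assert (Hstep : (x + mu + y', y') = Tmap mu f e d (x, y))
    by (unfold Tmap, y'; simpl; f_equal; ring).
  rewrite Hstep. unfold Titer. rewrite Nat.iter_swap.
  fold (Titer mu f e d q (x, y)). rewrite Hq_orbit.
  unfold Tmap; simpl. unfold mu. rewrite INR_mult_rot_number, periodic_add_IZR_mult by auto.
  unfold y'. split; ring.
Qed.

Lemma Delta_orbit_shift (p : Z) (q : nat) (f : R -> R) (epsb eta : R) (Delta Y : R -> R -> R) :
  (0 < q)%nat -> (forall x, f (x + 2 * PI) = f x) ->
  (forall x e, Rabs e < epsb ->
     Rabs (Delta x e) < eta /\ Rabs (Y x e) < eta /\
     nR (rot_number p q) f q x (Y x e) e (Delta x e) = 0 /\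
     nS (rot_number p q) f q x (Y x e) e (Delta x e) = 0) ->
  (forall x e delta y, Rabs e < epsb -> Rabs delta < eta -> Rabs y < eta ->
     nR (rot_number p q) f q x y e delta = 0 ->
     nS (rot_number p q) f q x y e delta = 0 ->
     delta = Delta x e /\ y = Y x e) ->
  forall x e, Rabs e < epsb -> Rabs (Y x e - Delta x e - e * f x) < eta ->
  Delta (x + rot_number p q + (Y x e - Delta x e - e * f x)) e = Delta x e.
Proof.
  intros Hq Hf Hsol Huniq x e He Hy.
  destruct (Hsol x e He) as [HD [_ [HR HS]]].
  destruct (periodic_orbit_Tmap p q f e (Delta x e) x (Y x e) Hq Hf HR HS) as [HR' HS'].
  destruct (Huniq _ e (Delta x e) _ He HD Hy HR' HS') as [Hshift _].
  symmetry. exact Hshift.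
Qed.

Lemma orbit_shift_small (f : R -> R) (U : R -> R -> Prop) (Delta Y : R -> R -> R) (x : R) :
  real_analytic2 Delta U -> real_analytic2 Y U -> U x 0 -> Delta x 0 = 0 -> Y x 0 = 0 ->
  forall eps, 0 < eps ->
  exists d, 0 < d /\ forall e, Rabs e <= d -> Rabs (Y x e - Delta x e - e * f x) < eps.
Proof.
  intros HD HY HU HD0 HY0 eps Heps.
  destruct (real_analytic2_continuous_at0 Delta U x HD HU (eps / 3) ltac:(lra)) as [d1 [Hd1 H1]].
  destruct (real_analytic2_continuous_at0 Y U x HY HU (eps / 3) ltac:(lra)) as [d2 [Hd2 H2]].
  rewrite HD0 in H1. rewrite HY0 in H2.
  set (C := Rabs (f x) + 1).
  assert (HC : 0 < C) by (unfold C; pose proof (Rabs_pos (f x)); lra).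
  exists (Rmin (Rmin d1 d2) (eps / 3 / C)).
  split; [repeat apply Rmin_glb_lt; auto; apply Rdiv_lt_0_compat; lra |].
  intros e He.
  pose proof (Rmin_l (Rmin d1 d2) (eps / 3 / C)). pose proof (Rmin_r (Rmin d1 d2) (eps / 3 / C)).
  pose proof (Rmin_l d1 d2). pose proof (Rmin_r d1 d2).
  specialize (H1 e ltac:(lra)). specialize (H2 e ltac:(lra)). rewrite Rminus_0_r in H1, H2.
  assert (Hef : Rabs (e * f x) <= eps / 3).
  { rewrite Rabs_mult. apply (Rle_trans _ (Rabs e * C)).
    - apply Rmult_le_compat_l; [apply Rabs_pos | unfold C; lra].
    - apply (Rle_trans _ (eps / 3 / C * C)); [apply Rmult_le_compat_r; lra |].
      right. field. lra. }
  unfold Rminus. eapply Rle_lt_trans; [apply Rabs_triang |]. rewrite Rabs_Ropp.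
  pose proof (Rabs_triang (Y x e) (- Delta x e)). rewrite Rabs_Ropp in *. lra.
Qed.

Theorem lemma2 (p : Z) (q : nat) (f : R -> R)
  (Hq : (1 <= q)%nat)
  (Hfper : forall x, f (x + 2 * PI) = f x)
  (Hfan : real_analytic1 f)
  (epsb eta : R) (Heps : 0 < epsb) (Heta : 0 < eta)
  (Delta Y : R -> R -> R) (Deltan : nat -> R -> R)
  (HDan : real_analytic2 Delta (fun _ e => Rabs e < epsb))
  (HYan : real_analytic2 Y (fun _ e => Rabs e < epsb))
  (HD0 : forall x, Delta x 0 = 0)
  (HY0 : forall x, Y x 0 = 0)
  (Hsol : forall x e, Rabs e < epsb ->
     Rabs (Delta x e) < eta /\ Rabs (Y x e) < eta /\
     nR (rot_number p q) f q x (Y x e) e (Delta x e) = 0 /\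
     nS (rot_number p q) f q x (Y x e) e (Delta x e) = 0)
  (Huniq : forall x e delta y, Rabs e < epsb -> Rabs delta < eta -> Rabs y < eta ->
     nR (rot_number p q) f q x y e delta = 0 ->
     nS (rot_number p q) f q x y e delta = 0 ->
     delta = Delta x e /\ y = Y x e)
  (Hexp : forall x, exists rho, 0 < rho /\
     forall e, Rabs e < rho -> is_series (fun n => Deltan n x * e ^ n) (Delta x e))
  (Hnonind : exists x1 x2 e, Rabs e < epsb /\ Delta x1 e <> Delta x2 e)
  (r : nat) (Hr1 : (1 <= r)%nat)
  (Hrnc : exists x1 x2, Deltan r x1 <> Deltan r x2)
  (Hrmin : forall n, (n < r)%nat -> forall x1 x2, Deltan n x1 = Deltan n x2) :
  forall x, Deltan r (x + rot_number p q) = Deltan r x.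
Proof.
  intros x. set (mu := rot_number p q).
  assert (HU0 : Rabs 0 < epsb) by (rewrite Rabs_R0; lra).
  apply cond_eq. intros eps Heps_pos.
  destruct (real_analytic2_tail_near _ _ _ x HDan HU0 Hexp r (eps / 2) ltac:(lra))
    as [d1 [Hd1 Htail_x]].
  destruct (real_analytic2_tail_near _ _ _ (x + mu) HDan HU0 Hexp r (eps / 2) ltac:(lra))
    as [d2 [Hd2 Htail_xmu]].
  destruct (orbit_shift_small f _ Delta Y x HDan HYan HU0 (HD0 x) (HY0 x) (Rmin d2 eta)
              ltac:(apply Rmin_glb_lt; lra)) as [d3 [Hd3 Hshift]].
  set (e := Rmin (Rmin d1 d2) (Rmin d3 (epsb / 2))).
  assert (He : 0 < e /\ e <= d1 /\ e <= d2 /\ e <= d3 /\ e < epsb).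
  { unfold e. pose proof (Rmin_l (Rmin d1 d2) (Rmin d3 (epsb / 2))).
    pose proof (Rmin_r (Rmin d1 d2) (Rmin d3 (epsb / 2))).
    pose proof (Rmin_l d1 d2). pose proof (Rmin_r d1 d2).
    pose proof (Rmin_l d3 (epsb / 2)). pose proof (Rmin_r d3 (epsb / 2)).
    repeat split; try lra. repeat apply Rmin_glb_lt; lra. }
  destruct He as [He_pos [He_d1 [He_d2 [He_d3 He_epsb]]]].
  assert (Habs_e : Rabs e = e) by (apply Rabs_pos_eq; lra).
  set (y' := Y x e - Delta x e - e * f x).
  assert (Hy' : Rabs y' < d2 /\ Rabs y' < eta).
  { pose proof (Hshift e ltac:(lra)) as Hsmall. fold y' in Hsmall.
    pose proof (Rmin_l d2 eta). pose proof (Rmin_r d2 eta). lra. }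
  assert (Hinv : Delta (x + mu + y') e = Delta x e)
    by (apply (Delta_orbit_shift p q f epsb eta); auto; [lra | apply Hy']).
  destruct (Htail_x 0 e ltac:(rewrite Rabs_R0; lra) ltac:(lra)) as [Hser_x Hnear_x].
  destruct (Htail_xmu y' e ltac:(destruct Hy'; lra) ltac:(lra)) as [Hser_xmu Hnear_xmu].
  rewrite Rplus_0_r in Hser_x, Hnear_x. rewrite Hinv in Hser_xmu.
  destruct (is_series_pow_common_tail _ _ e _ r Hr1 ltac:(lra)
              (fun n Hn => Hrmin n Hn x (x + mu + y')) Hser_x Hser_xmu) as [T [HT_x HT_xmu]].
  pose proof (Hnear_x T HT_x). pose proof (Hnear_xmu T HT_xmu).
  replace (Deltan r (x + mu) - Deltan r x)
    with ((T - Deltan r x) - (T - Deltan r (x + mu))) by ring.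
  eapply Rle_lt_trans; [apply Rabs_triang |]. rewrite Rabs_Ropp. lra.
Qed.
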